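(* Assume the standing assumptions below. Let $X_k\in\mathbb{R}^{n\times n}$ be symmetric with $X_k\succeq0$, and let $X_{k+1}$ be a symmetric matrix satisfying the Lyapunov equation $$\widehat A_k^{\mathsf T}X_{k+1}+X_{k+1}\widehat A_k+\widehat\Pi_k(X_k)+M_k=0,$$ where $R_k=R+\Pi_{22}(X_k)$, $S_k=X_kB+L+\Pi_{12}(X_k)$, $\widehat A_k=A-BR_k^{-1}S_k^{\mathsf T}$ $(=A_{\mathrm c}(X_k)-G_{\mathrm c}(X_k)X_k)$, $P_k=\begin{bmatrix}I_n\\-R_k^{-1}S_k^{\mathsf T}\end{bmatrix}$, $\widehat\Pi_k(X)=P_k^{\mathsf T}\Pi(X)P_k$, and $M_k=P_k^{\mathsf T}\begin{bmatrix}Q&L\\L^{\mathsf T}&R\end{bmatrix}P_k$. Then $A_{\mathrm c}(X_k)-G_{\mathrm c}(X_k)X_k$ is stable if and only if $X_{k+1}\succeq0$.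
   Context: Data: $A,Q\in\mathbb{R}^{n\times n}$, $B,L\in\mathbb{R}^{n\times m}$, $R\in\mathbb{R}^{m\times m}$, $A_0^i\in\mathbb{R}^{n\times n}$, $B_0^i\in\mathbb{R}^{n\times m}$ ($i=1,\dots,r$); $A_0^0=A$, $B_0^0=B$. For symmetric $X$: $\Pi(X)=\begin{bmatrix}\Pi_{11}(X)&\Pi_{12}(X)\\\Pi_{12}(X)^{\mathsf T}&\Pi_{22}(X)\end{bmatrix}$ with $\Pi_{11}(X)=\sum_{i=1}^r (A_0^i)^{\mathsf T}XA_0^i$, $\Pi_{12}(X)=\sum_i (A_0^i)^{\mathsf T}XB_0^i$, $\Pi_{22}(X)=\sum_i (B_0^i)^{\mathsf T}XB_0^i$; $L_{\mathrm c}=L+\Pi_{12}$, $R_{\mathrm c}=R+\Pi_{22}$; $A_{\mathrm c}(X)=A-BR_{\mathrm c}(X)^{-1}L_{\mathrm c}(X)^{\mathsf T}$, $G_{\mathrm c}(X)=BR_{\mathrm c}(X)^{-1}B^{\mathsf T}$. A matrix is stable if all eigenvalues lie in the open left half-plane. Standing assumptions: (1) $R\succ0$, $\begin{bmatrix}Q&L\\L^{\mathsf T}&R\end{bmatrix}\succeq0$; (2) there is $F\in\mathbb{R}^{m\times n}$ with $\dot S=(A+BF)S+S(A+BF)^{\mathsf T}+\sum_{i=1}^r(A_0^i+B_0^iF)S(A_0^i+B_0^iF)^{\mathsf T}$ exponentially stable; (3) with $C^{\mathsf T}C=Q-LR^{-1}L^{\mathsf T}$, $C\in\mathbb{R}^{p\times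 n}$, and $\widetilde A_0^i=A_0^i-B_0^iR^{-1}L^{\mathsf T}$, there is $K\in\mathbb{R}^{n\times p}$ with $\dot S=(\widetilde A_0^0+KC)S+S(\widetilde A_0^0+KC)^{\mathsf T}+\sum_{i=1}^r\widetilde A_0^iS(\widetilde A_0^i)^{\mathsf T}$ exponentially stable; (4) $\mathcal N(Q-LR^{-1}L^{\mathsf T})\subseteq\mathcal N(L^{\mathsf T})\cap\bigcap_i\mathcal N(A_0^i)$; (5) $(A,B)$ stabilizable and $(Q-LR^{-1}L^{\mathsf T},A)$ detectable. *)

From HB Require Import structures.
From mathcomp Require Import all_boot all_order all_algebra.
From mathcomp Require Import complex.
From mathcomp Require Import all_classical all_reals all_analysis.
Set Implicit Arguments. Unset Strict Implicit. Unset Printing Implicit Defensive.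
Import Order.TTheory GRing.Theory Num.Theory.
Local Open Scope ring_scope.

Section Defs.
Variable R : realType.

Definition psd (n : nat) (X : 'M[R]_n) : Prop :=
  X^T = X /\ forall v : 'cV[R]_n, 0 <= (v^T *m X *m v) 0 0.

Definition pd (n : nat) (X : 'M[R]_n) : Prop :=
  X^T = X /\ forall v : 'cV[R]_n, v != 0 -> 0 < (v^T *m X *m v) 0 0.

Definition stable (n : nat) (A : 'M[R]_n) : Prop :=
  forall z : R[i], eigenvalue (map_mx (fun x : R => (x%:C)%C) A) z -> complex.Re z < 0.

Definition mx_abs_sum (n : nat) (S : 'M[R]_n) : R := \sum_i \sum_j `|S i j|.

Definition exp_stable_ode (n : nat) (Lop : 'M[R]_n -> 'M[R]_n) : Prop :=
  exists c a : R, 0 < a /\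
    forall S : R -> 'M[R]_n,
      (forall (t : R) i j, is_derive t (1 : R) (fun s : R => S s i j) (Lop (S t) i j)) ->
      forall t, 0 <= t -> mx_abs_sum (S t) <= c * expR (- (a * t)) * mx_abs_sum (S 0).

Variables (n m r : nat).
Variables (A Q : 'M[R]_n) (B L : 'M[R]_(n, m)) (Rm : 'M[R]_m)
          (A0 : 'I_r -> 'M[R]_n) (B0 : 'I_r -> 'M[R]_(n, m)).

Definition Pi11 (X : 'M[R]_n) : 'M[R]_n := \sum_i ((A0 i)^T *m X *m A0 i).
Definition Pi12 (X : 'M[R]_n) : 'M[R]_(n, m) := \sum_i ((A0 i)^T *m X *m B0 i).
Definition Pi22 (X : 'M[R]_n) : 'M[R]_m := \sum_i ((B0 i)^T *m X *m B0 i).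
Definition Pi (X : 'M[R]_n) : 'M[R]_(n + m) :=
  block_mx (Pi11 X) (Pi12 X) (Pi12 X)^T (Pi22 X).

Definition Lc (X : 'M[R]_n) := L + Pi12 X.
Definition Rc (X : 'M[R]_n) := Rm + Pi22 X.
Definition Ac (X : 'M[R]_n) : 'M[R]_n := A - B *m invmx (Rc X) *m (Lc X)^T.
Definition Gc (X : 'M[R]_n) : 'M[R]_n := B *m invmx (Rc X) *m B^T.

Definition assum1 : Prop := pd Rm /\ psd (block_mx Q L L^T Rm).

Definition assum2 : Prop :=
  exists F : 'M[R]_(m, n),
    exp_stable_ode (fun S => (A + B *m F) *m S + S *m (A + B *m F)^T +
      \sum_i ((A0 i + B0 i *m F) *m S *m (A0 i + B0 i *m F)^T)).

Definition Qt : 'M[R]_n := Q - L *m invmx Rm *m L^T.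
Definition A0t (i : 'I_r) : 'M[R]_n := A0 i - B0 i *m invmx Rm *m L^T.
Definition At00 : 'M[R]_n := A - B *m invmx Rm *m L^T.

Definition assum3 : Prop :=
  exists (p : nat) (C : 'M[R]_(p, n)), C^T *m C = Qt /\
    exists K : 'M[R]_(n, p),
      exp_stable_ode (fun S => (At00 + K *m C) *m S + S *m (At00 + K *m C)^T +
        \sum_i (A0t i *m S *m (A0t i)^T)).

Definition assum4 : Prop :=
  forall v : 'cV[R]_n, Qt *m v = 0 -> L^T *m v = 0 /\ forall i, A0 i *m v = 0.

Definition assum5 : Prop :=
  (exists F : 'M[R]_(m, n), stable (A + B *m F)) /\
  (exists K : 'M[R]_n, stable (A + K *m Qt)).

Definition standing_assumptions : Prop :=
  [/\ assum1, assum2, assum3, assum4 & assum5].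

Definition Rk (X : 'M[R]_n) : 'M[R]_m := Rm + Pi22 X.
Definition Sk (X : 'M[R]_n) : 'M[R]_(n, m) := X *m B + L + Pi12 X.
Definition Ahat (X : 'M[R]_n) : 'M[R]_n := A - B *m invmx (Rk X) *m (Sk X)^T.
Definition Pk (X : 'M[R]_n) : 'M[R]_(n + m, n) :=
  col_mx 1%:M (- (invmx (Rk X) *m (Sk X)^T)).
Definition Pihat (Xk X : 'M[R]_n) : 'M[R]_n := (Pk Xk)^T *m Pi X *m Pk Xk.
Definition Mk (X : 'M[R]_n) : 'M[R]_n :=
  (Pk X)^T *m block_mx Q L L^T Rm *m Pk X.

End Defs.

From HB Require Import structures.
From mathcomp Require Import all_boot all_order all_algebra.
From mathcomp Require Import complex.
From mathcomp Require Import all_classical all_reals all_analysis.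
From mathcomp Require Import ring.
Import Order.TTheory GRing.Theory Num.Theory.
Local Open Scope ring_scope.

(* Forward implication: as Pihat + M_k is positive semidefinite, this is
   Lyapunov's theorem.  Complexify and triangularize the closed-loop matrix in
   a unitary Schur basis; congruence preserves Lyapunov equations.  For a lower
   triangular matrix whose diagonal lies in the open left half-plane, the
   corner of the equation reads -2 Re(lam) y = w >= 0, and if y = 0 the whole
   first row of the solution vanishes.  A unipotent congruence then splits the
   solution into y and its Schur complement, which solves the Lyapunov
   equation of the trailing block with a positive semidefinite right-hand
   side, so induction applies.

   Backward implication: if Ahat v = lam v with Re lam >= 0, the equation gives
   2 Re(lam) v^* X v = - v^* (Pihat + M_k) v, hence v^* M_k v = 0.  Since
   [Q L; L^T R] is positive semidefinite and R > 0, P_k v lies in its kernel,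
   so (Q - L R^-1 L^T) v = 0 and R_k^-1 S_k^T v = R^-1 L^T v, which vanishes by
   assumption (4).  Thus A v = lam v and v is an eigenvector of
   A + K (Q - L R^-1 L^T), contradicting assumption (5). *)

Set Implicit Arguments.
Unset Strict Implicit.
Unset Printing Implicit Defensive.
Local Open Scope sesquilinear_scope.

Lemma eigenvalue_trmx (F : fieldType) n (A : 'M[F]_n) a :
  eigenvalue A^T a = eigenvalue A a.
Proof.
rewrite !eigenvalue_root_char /char_poly -det_tr; congr (root (\det _) a).
by apply/matrixP => i j; rewrite !mxE eq_sym.
Qed.

Lemma eigenvalue_trig (F : fieldType) n (T : 'M[F]_n) i :
  is_trig_mx T -> eigenvalue T (T i i).
Proof.
move=> T_trig; rewrite eigenvalue_root_char char_poly_trig // /root horner_prod.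
by apply/prodf_eq0; exists i => //; rewrite hornerXsubC subrr.
Qed.

Lemma trig_unitmx (F : fieldType) n (T : 'M[F]_n) :
  is_trig_mx T -> (forall i, T i i != 0) -> T \in unitmx.
Proof.
move=> /det_trig dT T_ne0; rewrite unitmxE unitfE dT.
by apply/prodf_neq0 => i _; exact: T_ne0.
Qed.

Lemma sum_block_mx (V : nmodType) r m1 m2 n1 n2 (f : 'I_r -> 'M[V]_(m1, n1))
    (g : 'I_r -> 'M[V]_(m1, n2)) (h : 'I_r -> 'M[V]_(m2, n1)) (k : 'I_r -> 'M[V]_(m2, n2)) :
  \sum_i block_mx (f i) (g i) (h i) (k i)
    = block_mx (\sum_i f i) (\sum_i g i) (\sum_i h i) (\sum_i k i).
Proof.
elim: r f g h k => [|r IH] f g h k; first by rewrite !big_ord0 block_mx0.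
by rewrite !big_ord_recr /= IH add_block_mx.
Qed.

Lemma schur_complement_ker (F : fieldType) n m (Q : 'M[F]_n) (L : 'M[F]_(n, m))
    (Rm : 'M[F]_m) (v : 'rV[F]_n) (u : 'rV[F]_m) :
  Rm \in unitmx -> row_mx v u *m block_mx Q L L^T Rm = 0 ->
  v *m (Q - L *m invmx Rm *m L^T) = 0 /\ u = - (v *m L *m invmx Rm).
Proof.
move=> Rm_unit; rewrite mul_row_block -row_mx0 => /eq_row_mx[vQ vL].
have uRm : u *m Rm = - (v *m L) by apply/eqP; rewrite -addr_eq0 addrC vL.
have uE : u = - (v *m L *m invmx Rm) by rewrite -[u](mulmxK Rm_unit) uRm mulNmx.
by split=> //; rewrite mulmxBr !mulmxA -mulNmx -uE.
Qed.

Section HermitianPsd.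
Variable C : numClosedFieldType.

Definition hpsd n (K : 'M[C]_n) : Prop :=
  K^t* = K /\ forall u : 'rV[C]_n, 0 <= (u *m K *m u^t*) 0 0.

Lemma trmxC_mul m n p (A : 'M[C]_(m, n)) (B : 'M[C]_(n, p)) :
  (A *m B)^t* = B^t* *m A^t*.
Proof. by rewrite trmx_mul map_mxM. Qed.

Lemma hpsd_congr p q (P : 'M[C]_(p, q)) (K : 'M[C]_q) :
  hpsd K -> hpsd (P *m K *m P^t*).
Proof.
move=> [hK K_ge0]; split; first by rewrite !trmxC_mul trmxCK hK mulmxA.
by move=> u; have := K_ge0 (u *m P); rewrite trmxC_mul !mulmxA.
Qed.

Lemma hpsd_ker n (K : 'M[C]_n) (u : 'rV_n) :
  hpsd K -> (u *m K *m u^t*) 0 0 = 0 -> u *m K = 0.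
Proof.
move=> [hK K_ge0] Kuu0.
pose form x y := dotmx (x *m K) y.
have formE x : form x x = (x *m K *m x^t*) 0 0 by rewrite /form dotmxE.
have formC x y : form y x = (form x y)^*.
  by rewrite /form hermC /= expr0 mul1r !dotmxE trmxC_mul hK mulmxA.
suff uK_orth q : form u q = 0.
  apply/eqP; apply: contraT => /dotmx_is_dotmx.
  by have := uK_orth (u *m K); rewrite /form => ->; rewrite ltxx.
set s := form u q; set k := form q q.
have k_ge0 : 0 <= k by rewrite /k formE.
have k1_real : (k + 1)^* = k + 1.
  by rewrite rmorphD rmorph1 /= (CrealP (ger0_real k_ge0)).
(* Test the form on (k + 1) u - s q, whose value is - |s|^2 (k + 2). *)
have := K_ge0 ((k + 1) *: u - s *: q); rewrite -formE /form.
rewrite mulmxBl -!scalemxAl linearBl linearBr linearBr !linearZl_LR !linearZr_LR /=.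
rewrite -!/(form _ _) (formC u q) -/s -/k [form u u]formE Kuu0 k1_real mulr0.
have -> : (k + 1) * 0 - (k + 1) * (s^* * s) - (s * ((k + 1) * s^*) - s * (s^* * k))
    = - (s * s^*) * (k + 2%:R) by ring.
have k2_gt0 : 0 < k + 2%:R by rewrite ltr_wpDl.
rewrite mulNr oppr_ge0 pmulr_lle0 // => ss_le0.
by apply/eqP; rewrite -mul_conjC_eq0 eq_le ss_le0 mul_conjC_ge0.
Qed.

Lemma hpsd_scalar n (a : C) : 0 <= a -> hpsd (a%:M : 'M[C]_n).
Proof.
move=> a_ge0; split; first by rewrite tr_scalar_mx map_scalar_mx /= (CrealP (ger0_real a_ge0)).
move=> u; rewrite mul_mx_scalar -scalemxAl mxE -dotmxE.
by rewrite mulr_ge0 // dnorm_ge0.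
Qed.

Lemma hpsd_ulsubmx m n (K : 'M[C]_(m + n)) : hpsd K -> hpsd (ulsubmx K).
Proof.
suff -> : ulsubmx K = row_mx 1%:M 0 *m K *m (row_mx 1%:M 0)^t* by exact: hpsd_congr.
by rewrite -{2}[K]submxK mul_row_block !mul1mx !mul0mx !addr0 tr_row_mx map_col_mx
  trmx1 map_mx1 trmx0 map_mx0 mul_row_col mulmx1 mulmx0 addr0.
Qed.

Lemma hpsd_drsubmx m n (K : 'M[C]_(m + n)) : hpsd K -> hpsd (drsubmx K).
Proof.
suff -> : drsubmx K = row_mx 0 1%:M *m K *m (row_mx 0 1%:M)^t* by exact: hpsd_congr.
by rewrite -{2}[K]submxK mul_row_block !mul1mx !mul0mx !add0r tr_row_mx map_col_mx
  trmx1 map_mx1 trmx0 map_mx0 mul_row_col mulmx1 mulmx0 add0r.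
Qed.

Lemma hpsd_block_diag m n (K1 : 'M[C]_m) (K2 : 'M[C]_n) :
  hpsd K1 -> hpsd K2 -> hpsd (block_mx K1 0 0 K2).
Proof.
move=> [hK1 K1_ge0] [hK2 K2_ge0]; split.
  by rewrite tr_block_mx map_block_mx hK1 hK2 !trmx0 !map_mx0.
move=> u; rewrite -[u]hsubmxK mul_row_block !mulmx0 addr0 add0r tr_row_mx map_col_mx.
by rewrite mul_row_col mxE addr_ge0.
Qed.

Lemma lyapunov_congr p n (P : 'M[C]_(p, n)) (G : 'M[C]_n) (G' : 'M[C]_p) (Y V : 'M[C]_n) :
  P *m G = G' *m P -> G *m Y + Y *m G^t* = - V ->
  G' *m (P *m Y *m P^t*) + (P *m Y *m P^t*) *m G'^t* = - (P *m V *m P^t*).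
Proof.
move=> PG E; have PGt : G^t* *m P^t* = P^t* *m G'^t* by rewrite -!trmxC_mul PG.
by rewrite -mulNmx -mulmxN -E mulmxDr mulmxDl !mulmxA PG -!mulmxA PGt.
Qed.

End HermitianPsd.

Section LyapunovTriangularStep.
Variables (C : numClosedFieldType) (n : nat) (lam : C) (a : 'cV[C]_n) (T' : 'M[C]_n).
Hypothesis lam_neg : lam + lam^* < 0.
Let T := block_mx lam%:M 0 a T'.

Lemma lyapunov_trig_corner (y : C) (b : 'rV[C]_n) (Y' : 'M[C]_n) (V : 'M[C]_(1 + n)) :
  lam^*%:M + T' \in unitmx -> hpsd V ->
  T *m block_mx y%:M b (b^t*) Y' + block_mx y%:M b (b^t*) Y' *m T^t* = - V ->
  0 <= y /\ (y = 0 -> b = 0).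
Proof.
move=> T'_unit hV E; set w := ulsubmx V 0 0.
have := E; rewrite -[V]submxK (mx11_scalar (ulsubmx V)) -/w.
rewrite tr_block_mx map_block_mx tr_scalar_mx map_scalar_mx trmx0 map_mx0 /=.
rewrite !mulmx_block !(mul0mx, mulmx0, addr0, add0r) add_block_mx opp_block_mx.
case/eq_block_mx => E11 E12 _ _.
have Eyw : y * - (lam + lam^*) = w.
  move/matrixP/(_ 0 0): E11; rewrite !mul_scalar_mx !mxE eqxx !mulr1n.
  by move=> E11; rewrite -[w]opprK -E11 mulrN mulrDr mulrC.
have rho_gt0 : 0 < - (lam + lam^*) by rewrite oppr_gt0.
have w_ge0 : 0 <= w.
  have [_ /(_ 1%:M)] := hpsd_ulsubmx hV.
  by rewrite trmx1 map_mx1 mul1mx mulmx1.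
split=> [|y0]; first by rewrite -(pmulr_lge0 _ rho_gt0) Eyw.
have uV : row_mx 1%:M 0 *m V = usubmx V by rewrite -{1}[V]vsubmxK mul_row_col mul1mx mul0mx addr0.
have V_ur0 : ursubmx V = 0.
  have := hpsd_ker (u := row_mx 1%:M 0) hV.
  rewrite uV tr_row_mx map_col_mx trmx1 map_mx1 trmx0 map_mx0 -[usubmx V]hsubmxK.
  rewrite mul_row_col mulmx1 mulmx0 addr0 -/w -Eyw y0 mul0r => /(_ erefl)/eqP.
  by rewrite row_mx_eq0 => /andP[_ /eqP].
have bT'0 : b *m (lam%:M + T'^t*) = 0.
  rewrite mulmxDr mul_mx_scalar -mul_scalar_mx -[RHS]oppr0 -V_ur0 -E12.
  by rewrite y0 raddf0 mul0mx add0r.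
have T'_unit' : lam%:M + T'^t* \in unitmx.
  suff -> : lam%:M + T'^t* = (lam^*%:M + T')^t* by rewrite map_unitmx unitmx_tr.
  by rewrite linearD map_mxD /= tr_scalar_mx map_scalar_mx /= conjCK.
by rewrite -[b]mulmx1 -(mulmxV T'_unit') mulmxA bT'0 mul0mx.
Qed.

Hypothesis T'_lyapunov : forall Z W : 'M[C]_n,
  Z^t* = Z -> hpsd W -> T' *m Z + Z *m T'^t* = - W -> hpsd Z.

Lemma lyapunov_trig_schur (y : C) (b : 'rV[C]_n) (Y' : 'M[C]_n) (V : 'M[C]_(1 + n)) :
  0 <= y -> (y = 0 -> b = 0) -> Y'^t* = Y' -> hpsd V ->
  T *m block_mx y%:M b (b^t*) Y' + block_mx y%:M b (b^t*) Y' *m T^t* = - V ->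
  hpsd (block_mx y%:M b (b^t*) Y').
Proof.
move=> y_ge0 b0 hY' hV E.
have y_real : y^* = y by apply/CrealP; exact: ger0_real.
have {b0}b_eq : b = y *: (y^-1 *: b).
  have [y_eq0 | y_ne0] := eqVneq y 0; first by rewrite b0 // !scaler0.
  by rewrite scalerA mulfV ?scale1r.
move: (y^-1 *: b) b_eq => d b_eq; subst b.
have dt : (y *: d)^t* = y *: d^t* by rewrite linearZ map_mxZ /= y_real.
rewrite dt in E *.
pose S := Y' - y *: (d^t* *m d).
pose P : 'M[C]_(1 + n) := block_mx 1%:M 0 (- d^t*) 1%:M.
pose G := block_mx lam%:M 0 (a + T' *m d^t* - lam *: d^t*) T'.
have PT : P *m T = G *m P.
  rewrite !mulmx_block !(mul1mx, mulmx1, mul0mx, mulmx0, addr0, add0r) mul_mx_scalar.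
  by rewrite mulmxN scalerN addrC addrAC addrK.
have PYP : P *m block_mx y%:M (y *: d) (y *: d^t*) Y' *m P^t* = block_mx y%:M 0 0 S.
  rewrite tr_block_mx map_block_mx linearN map_mxN /= trmxCK !trmx1 !map_mx1 trmx0 map_mx0.
  rewrite !mulmx_block !(mul1mx, mulmx1, mul0mx, mulmx0, addr0, add0r).
  rewrite mul_scalar_mx mul_mx_scalar !scalerN !addNr mul0mx add0r.
  by rewrite mulNmx -scalemxAr addrC.
have hS : S^t* = S.
  by rewrite /S linearB map_mxB /= linearZ map_mxZ /= y_real trmxC_mul trmxCK hY'.
have E22 : T' *m S + S *m T'^t* = - drsubmx (P *m V *m P^t*).
  have := lyapunov_congr PT E; rewrite PYP -[P *m V *m _]submxK.
  rewrite tr_block_mx map_block_mx trmx0 map_mx0 !mulmx_block add_block_mx opp_block_mx.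
  by case/eq_block_mx => _ _ _; rewrite !(mul0mx, mulmx0, addr0, add0r) block_mxKdr.
pose Q : 'M[C]_(1 + n) := block_mx 1%:M 0 (d^t*) 1%:M.
have QP : Q *m P = 1%:M.
  rewrite mulmx_block !(mul1mx, mulmx1, mul0mx, mulmx0, addr0, add0r) addrN.
  by rewrite scalar_mx_block.
have -> : block_mx y%:M (y *: d) (y *: d^t*) Y' = Q *m block_mx y%:M 0 0 S *m Q^t*.
  by rewrite -PYP !mulmxA QP mul1mx -mulmxA -trmxC_mul QP trmx1 map_mx1 mulmx1.
apply: hpsd_congr; apply: hpsd_block_diag; first exact: hpsd_scalar.
exact: T'_lyapunov hS (hpsd_drsubmx (hpsd_congr P hV)) E22.
Qed.

End LyapunovTriangularStep.

Section LyapunovTriangular.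
Variable C : numClosedFieldType.

Lemma hermitian_block_mx n (Y : 'M[C]_(1 + n)) : Y^t* = Y ->
  Y = block_mx (ulsubmx Y 0 0)%:M (ursubmx Y) ((ursubmx Y)^t*) (drsubmx Y)
  /\ (drsubmx Y)^t* = drsubmx Y.
Proof.
move=> hY; have := hY; rewrite -{1 2}[Y]submxK tr_block_mx map_block_mx.
by case/eq_block_mx => _ _ -> ->; rewrite -mx11_scalar submxK.
Qed.

Lemma lyapunov_trig n (T : 'M[C]_n) : is_trig_mx T ->
  (forall i, T i i + (T i i)^* < 0) ->
  forall Y V : 'M[C]_n, Y^t* = Y -> hpsd V -> T *m Y + Y *m T^t* = - V -> hpsd Y.
Proof.
elim/trigsqmx_ind => {n T} [|n x a T' T'_trig IH] T_diag Y V hY hV E.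
  by split=> // u; rewrite (thinmx0 u) !mul0mx mxE.
move: T_diag E; rewrite [x]mx11_scalar; set lam := x 0 0 => T_diag E.
have lam_neg : lam + lam^* < 0 by have := T_diag (lshift n 0); rewrite block_mxEul mxE eqxx mulr1n.
have T'_diag i : T' i i + (T' i i)^* < 0.
  by have := T_diag (rshift 1 i); rewrite block_mxEdr.
have T'_unit : lam^*%:M + T' \in unitmx.
  apply: trig_unitmx => [|i].
    apply/is_trig_mxP => i j lt_ij; rewrite !mxE (is_trig_mxP T'_trig) //.
    by rewrite -val_eqE ltn_eqF // mulr0n addr0.
  rewrite !mxE eqxx mulr1n; apply: contraTneq (ltrD lam_neg (T'_diag i)) => s0.
  have -> : lam + lam^* + (T' i i + (T' i i)^*) = lam^* + T' i i + (lam^* + T' i i)^*.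
    by rewrite rmorphD /= conjCK; ring.
  by rewrite s0 conjC0 !addr0 ltxx.
have [Y_blk hY'] := hermitian_block_mx hY; rewrite Y_blk in E *.
have [y_ge0 b0] := lyapunov_trig_corner lam_neg T'_unit hV E.
exact (lyapunov_trig_schur (IH T'_diag) y_ge0 b0 hY' hV E).
Qed.

Lemma lyapunov_hpsd n (G Y V : 'M[C]_n) :
  (forall z, eigenvalue G z -> z + z^* < 0) -> Y^t* = Y -> hpsd V ->
  G *m Y + Y *m G^t* = - V -> hpsd Y.
Proof.
case: n G Y V => [|n] G Y V G_stable hY hV E.
  by split=> // u; rewrite (thinmx0 u) !mul0mx mxE.
have [P P_unitary PGP_trig] := Schur G (ltn0Sn n).
set T := P *m G *m P^t*.
have T_trig : is_trig_mx T by rewrite /T -conjymx.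
have PtP : P^t* *m P = 1%:M by rewrite -invmx_unitary // mulVmx // unitarymx_unit.
have PG : P *m G = T *m P by rewrite /T -mulmxA PtP mulmx1.
have T_diag i : T i i + (T i i)^* < 0.
  apply/G_stable/(eigenvalue_conjmx (V := P)).
  - by rewrite submx_full // row_full_unit unitarymx_unit.
  - by rewrite row_free_unit unitarymx_unit.
  by rewrite conjymx //; exact: eigenvalue_trig.
have hPY : (P *m Y *m P^t*)^t* = P *m Y *m P^t* by rewrite !trmxC_mul trmxCK hY mulmxA.
move: (lyapunov_trig T_trig T_diag hPY (hpsd_congr P hV) (lyapunov_congr PG E)).
by move/(hpsd_congr (P^t*)); rewrite trmxCK !mulmxA PtP mul1mx -mulmxA PtP mulmx1.
Qed.

End LyapunovTriangular.

Section RealPsd.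
Variable R : realType.

Lemma psd_congr p q (Z : 'M[R]_p) (P : 'M[R]_(p, q)) : psd Z -> psd (P^T *m Z *m P).
Proof.
move=> [hZ Z_ge0]; split; first by rewrite !trmx_mul trmxK hZ mulmxA.
by move=> v; have := Z_ge0 (P *m v); rewrite trmx_mul !mulmxA.
Qed.

Lemma psd_add p (Z1 Z2 : 'M[R]_p) : psd Z1 -> psd Z2 -> psd (Z1 + Z2).
Proof.
move=> [hZ1 Z1_ge0] [hZ2 Z2_ge0]; split; first by rewrite linearD /= hZ1 hZ2.
by move=> v; rewrite mulmxDr mulmxDl mxE addr_ge0.
Qed.

Lemma psd_sum p r (F : 'I_r -> 'M[R]_p) : (forall i, psd (F i)) -> psd (\sum_i F i).
Proof.
move=> F_psd; apply: big_ind => //; last exact: psd_add.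
by split=> [|v]; rewrite ?trmx0 // mulmx0 mul0mx mxE.
Qed.

Lemma pd_unitmx p (M : 'M[R]_p) : pd M -> M \in unitmx.
Proof.
move=> [_ M_gt0]; rewrite unitmxE unitfE; apply/negP => /det0P[x x_ne0 xM0].
have xT_ne0 : x^T != 0 by rewrite -(inj_eq (@trmx_inj _ _ _)) trmxK trmx0.
by have := M_gt0 _ xT_ne0; rewrite trmxK xM0 mul0mx mxE ltxx.
Qed.

End RealPsd.

Section Complexification.
Variable R : realType.
Local Notation toC := (real_complex R).

Lemma trmxC_real m n (A : 'M[R]_(m, n)) : (map_mx toC A)^t* = map_mx toC A^T.
Proof. by apply/matrixP => i j; rewrite !mxE; exact: conjc_real. Qed.

Lemma mx_complexE m n (A : 'M[R[i]]_(m, n)) :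
  A = map_mx toC (map_mx (@complex.Re R) A) + 'i *: map_mx toC (map_mx (@complex.Im R) A).
Proof. by apply/matrixP => i j; rewrite !mxE -complexiE -complexE. Qed.

Lemma psd_hpsd n (X : 'M[R]_n) : psd X <-> hpsd (map_mx toC X).
Proof.
split=> [[hX X_ge0] | [hXc Xc_ge0]]; last first.
  split; first by apply: (@map_mx_inj _ _ toC); rewrite -trmxC_real.
  move=> v; have := Xc_ge0 (map_mx toC v^T).
  by rewrite trmxC_real trmxK -!map_mxM mxE ler0c.
split=> [|u]; first by rewrite trmxC_real hX.
have form_real (x y : 'rV[R]_n) :
    dotmx (map_mx toC x *m map_mx toC X) (map_mx toC y) = toC ((x *m X *m y^T) 0 0).
  by rewrite dotmxE trmxC_real -!map_mxM mxE.
have form_sym (x y : 'rV[R]_n) : (y *m X *m x^T) 0 0 = (x *m X *m y^T) 0 0.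
  have tr11 (M : 'M[R]_1) : M^T 0 0 = M 0 0 by rewrite mxE.
  by rewrite -[LHS]tr11 !trmx_mul trmxK hX mulmxA.
rewrite -dotmxE [u]mx_complexE mulmxDl -scalemxAl.
rewrite linearDl linearDr linearDr !linearZl_LR !linearZr_LR /= !form_real form_sym.
rewrite conjCi mulNr addrA addrNK mulNr mulrN mulrA -expr2 sqrCi mulN1r opprK.
by rewrite -rmorphD ler0c addr_ge0 // -[x in (x *m X)]trmxK X_ge0.
Qed.

Lemma addC_conjE (z : R[i]) : z + z^* = toC (2 * complex.Re z).
Proof. by rewrite rmorphM /= rmorph_nat; exact: addcJ. Qed.

Lemma lyapunov_psd n (A X W : 'M[R]_n) : stable A -> X^T = X -> psd W ->
  A^T *m X + X *m A = - W -> psd X.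
Proof.
move=> A_stable hX /psd_hpsd hW E; apply/psd_hpsd.
apply: (lyapunov_hpsd (G := map_mx toC A^T) _ _ hW).
- move=> z; rewrite -map_trmx eigenvalue_trmx => /A_stable Re_lt0.
  by rewrite addC_conjE -(rmorph0 toC) ltcR pmulr_rlt0.
- by rewrite trmxC_real hX.
by rewrite trmxC_real trmxK -!map_mxM -map_mxD E map_mxN.
Qed.

Lemma lyapunov_isotropic n (A X W : 'M[R]_n) (z : R[i]) (v : 'rV[R[i]]_n) :
  psd X -> psd W -> A^T *m X + X *m A = - W ->
  v *m map_mx toC A^T = z *: v -> 0 <= complex.Re z ->
  (v *m map_mx toC W *m v^t*) 0 0 = 0.
Proof.
move=> /psd_hpsd [_ Xc_ge0] /psd_hpsd [_ Wc_ge0] E vA Re_ge0.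
have Av : map_mx toC A *m v^t* = z^* *: v^t*.
  by rewrite -[A]trmxK -trmxC_real -trmxC_mul vA linearZ map_mxZ.
have : (v *m map_mx toC (A^T *m X + X *m A) *m v^t*) 0 0
    = (z + z^*) * (v *m map_mx toC X *m v^t*) 0 0.
  rewrite map_mxD !map_mxM mulmxDr mulmxDl !mulmxA vA -[_ *m map_mx toC A *m _]mulmxA Av.
  by rewrite -scalemxAl -!scalemxAr -scalemxAl -scalerDl mxE.
rewrite E map_mxN mulmxN mulNmx mxE => /eqP; rewrite eqr_oppLR => /eqP Wv.
apply/eqP; rewrite eq_le Wc_ge0 andbT Wv oppr_le0 mulr_ge0 //.
by rewrite addC_conjE ler0c mulr_ge0.
Qed.

Lemma complex_mx_eq0 m n (a b : 'M[R]_(m, n)) :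
  map_mx toC a + 'i *: map_mx toC b = 0 -> a = 0 /\ b = 0.
Proof.
move=> /matrixP ab0; split; apply/matrixP => i j; have := ab0 i j;
  rewrite !mxE -complexiE /= => -[]; rewrite !(mul0r, mul1r, mulr0, subr0, addr0, add0r).
  by move=> ->.
by move=> _ ->.
Qed.

Lemma complex_ker_sub m p q (M : 'M[R]_(m, p)) (N : 'M[R]_(m, q)) :
  (forall x : 'rV[R]_m, x *m M = 0 -> x *m N = 0) ->
  forall v : 'rV[R[i]]_m, v *m map_mx toC M = 0 -> v *m map_mx toC N = 0.
Proof.
move=> MN v; rewrite [v]mx_complexE !mulmxDl -!scalemxAl -!map_mxM.
by case/complex_mx_eq0 => /MN -> /MN ->; rewrite map_mx0 scaler0 addr0.
Qed.
End Complexification.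

Section Iteration.
Variables (R : realType) (n m r : nat).
Variables (A Q : 'M[R]_n) (B L : 'M[R]_(n, m)) (Rm : 'M[R]_m).
Variables (A0 : 'I_r -> 'M[R]_n) (B0 : 'I_r -> 'M[R]_(n, m)).
Local Notation toC := (real_complex R).

Lemma Pi_sum X : X^T = X ->
  Pi A0 B0 X = \sum_i (row_mx (A0 i) (B0 i))^T *m X *m row_mx (A0 i) (B0 i).
Proof.
move=> hX; under eq_bigr do rewrite tr_row_mx mul_col_mx mul_col_row.
rewrite sum_block_mx /Pi /Pi12; congr block_mx.
rewrite (linear_sum (@trmx _ _ _)) /=; apply: eq_bigr => i _.
by rewrite !trmx_mul trmxK hX mulmxA.
Qed.

Lemma psd_Pi X : psd X -> psd (Pi A0 B0 X).
Proof.
by move=> X_psd; rewrite Pi_sum; [apply: psd_sum => i; exact: psd_congr | case: X_psd].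
Qed.

Lemma psd_Pihat_add_Mk X : assum1 Q L Rm -> psd X ->
  psd (Pihat B L Rm A0 B0 X X + Mk Q B L Rm A0 B0 X).
Proof.
by move=> [_ M_psd] X_psd; apply: psd_add; apply: psd_congr => //; exact: psd_Pi.
Qed.

Lemma Ac_sub_Gc_mul X : X^T = X ->
  Ac A B L Rm A0 B0 X - Gc B Rm B0 X *m X = Ahat A B L Rm A0 B0 X.
Proof.
move=> hX; rewrite /Ac /Gc /Ahat /Sk /Lc /Rk /Rc !linearD /= trmx_mul hX.
by rewrite mulmxA -!addrA; congr (_ + _); rewrite [RHS]addrC -addrA.
Qed.

Lemma Qt_sym : assum1 Q L Rm -> (Qt Q L Rm)^T = Qt Q L Rm.
Proof.
move=> [[hRm _] [+ _]]; rewrite tr_block_mx => /eq_block_mx[hQ _ _ _].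
by rewrite /Qt linearB /= !trmx_mul trmxK trmx_inv hRm hQ mulmxA.
Qed.

Lemma Mk_isotropic X (v : 'rV[R[i]]_n) :
  assum1 Q L Rm -> assum4 Q L Rm A0 ->
  (v *m map_mx toC (Mk Q B L Rm A0 B0 X) *m v^t*) 0 0 = 0 ->
  v *m map_mx toC (Qt Q L Rm) = 0 /\
  v *m map_mx toC (Ahat A B L Rm A0 B0 X)^T = v *m map_mx toC A^T.
Proof.
move=> a1 a4 vMv0; have [Rm_pd M_psd] := a1.
set U := - (invmx (Rk Rm B0 X) *m (Sk B L A0 B0 X)^T).
have vP : v *m map_mx toC (Pk B L Rm A0 B0 X)^T = row_mx v (v *m map_mx toC U^T).
  by rewrite /Pk tr_col_mx trmx1 map_row_mx map_mx1 mul_mx_row mulmx1.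
have := hpsd_ker ((psd_hpsd _).1 M_psd) (u := v *m map_mx toC (Pk B L Rm A0 B0 X)^T).
rewrite trmxC_mul trmxC_real trmxK !mulmxA.
rewrite /Mk !map_mxM !mulmxA in vMv0; rewrite vMv0 => /(_ erefl).
have Rm_unit : map_mx toC Rm \in unitmx by rewrite map_unitmx pd_unitmx.
rewrite vP map_block_mx -(map_trmx toC L) => /(schur_complement_ker Rm_unit)[vQt uE].
have vQt' : v *m map_mx toC (Qt Q L Rm) = 0 by rewrite /Qt map_mxB !map_mxM map_invmx -map_trmx.
have vL : v *m map_mx toC L = 0.
  apply: complex_ker_sub vQt' => x xQt.
  have Qtx : Qt Q L Rm *m x^T = 0 by rewrite -(Qt_sym a1) -trmx_mul xQt trmx0.
  have [LTx _] := a4 _ Qtx.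
  by rewrite -[x *m L]trmxK trmx_mul LTx trmx0.
split=> //; have -> : Ahat A B L Rm A0 B0 X = A + B *m U by rewrite /Ahat /U mulmxN mulmxA.
rewrite linearD /= trmx_mul map_mxD map_mxM mulmxDr mulmxA uE vL.
by rewrite mul0mx oppr0 mul0mx addr0.
Qed.

Lemma Ahat_stable Xk Xk1 :
  assum1 Q L Rm -> assum4 Q L Rm A0 -> assum5 A Q B L Rm -> psd Xk -> psd Xk1 ->
  (Ahat A B L Rm A0 B0 Xk)^T *m Xk1 + Xk1 *m Ahat A B L Rm A0 B0 Xk
    = - (Pihat B L Rm A0 B0 Xk Xk + Mk Q B L Rm A0 B0 Xk) ->
  stable (Ahat A B L Rm A0 B0 Xk).
Proof.
move=> a1 a4 [_ [K AKQt_stable]] Xk_psd Xk1_psd E z.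
rewrite -eigenvalue_trmx map_trmx => /eigenvalueP[v vAhat v_ne0].
rewrite ltNge; apply/negP => Re_ge0.
have := lyapunov_isotropic Xk1_psd (psd_Pihat_add_Mk a1 Xk_psd) E vAhat Re_ge0.
have [_ Pihat_ge0] := (psd_hpsd _).1 (psd_congr (Pk B L Rm A0 B0 Xk) (psd_Pi Xk_psd)).
have [_ Mk_ge0] := (psd_hpsd _).1 (psd_congr (Pk B L Rm A0 B0 Xk) a1.2).
rewrite map_mxD mulmxDr mulmxDl mxE => /eqP; rewrite paddr_eq0 // => /andP[_ /eqP vMv].
have [vQt vA] := Mk_isotropic a1 a4 vMv.
have : eigenvalue (map_mx toC (A + K *m Qt Q L Rm)) z.
  rewrite -eigenvalue_trmx map_trmx; apply/eigenvalueP; exists v => //.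
  rewrite linearD /= trmx_mul map_mxD map_mxM mulmxDr -vA vAhat mulmxA (Qt_sym a1) vQt.
  by rewrite mul0mx addr0.
by move/AKQt_stable; rewrite ltNge Re_ge0.
Qed.

End Iteration.

Theorem lemmaC2 (R : realType) (n m r : nat)
  (A Q : 'M[R]_n) (B L : 'M[R]_(n, m)) (Rm : 'M[R]_m)
  (A0 : 'I_r -> 'M[R]_n) (B0 : 'I_r -> 'M[R]_(n, m))
  (Xk Xk1 : 'M[R]_n) :
  standing_assumptions A Q B L Rm A0 B0 ->
  psd Xk ->
  Xk1^T = Xk1 ->
  (Ahat A B L Rm A0 B0 Xk)^T *m Xk1 + Xk1 *m Ahat A B L Rm A0 B0 Xk
    + Pihat B L Rm A0 B0 Xk Xk + Mk Q B L Rm A0 B0 Xk = 0 ->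
  (stable (Ac A B L Rm A0 B0 Xk - Gc B Rm B0 Xk *m Xk) <-> psd Xk1).
Proof.
move=> [a1 _ _ a4 a5] Xk_psd hXk1 E.
rewrite Ac_sub_Gc_mul; last by case: Xk_psd.
have E' : (Ahat A B L Rm A0 B0 Xk)^T *m Xk1 + Xk1 *m Ahat A B L Rm A0 B0 Xk
    = - (Pihat B L Rm A0 B0 Xk Xk + Mk Q B L Rm A0 B0 Xk).
  by apply/eqP; rewrite -addr_eq0 addrA E.
split=> [Ahat_stab | Xk1_psd].
  exact: lyapunov_psd Ahat_stab hXk1 (psd_Pihat_add_Mk B A0 B0 a1 Xk_psd) E'.
exact: Ahat_stable a1 a4 a5 Xk_psd Xk1_psd E'.
Qed.
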